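(* If a graph matroid family $\mathcal{M}$ is bounded, then it has the Lovász-Yemini property.
   Context: All graphs are finite and simple and have no isolated vertices. A graph matroid family $\mathcal{M}$ assigns to every graph $G$ a matroid $\mathcal{M}(G)$ on $E(G)$ such that (i) every graph isomorphism $V(G)\to V(H)$ induces an isomorphism $\mathcal{M}(G)\to\mathcal{M}(H)$, and (ii) for every subgraph $H$ of $G$, $\mathcal{M}(H)$ is the restriction of $\mathcal{M}(G)$ to $E(H)$. $r(G)$ is the rank of $\mathcal{M}(G)$. $\mathcal{M}$ is bounded if $r(K_n)$ is bounded in $n$. $G$ is $\mathcal{M}$-rigid if $r(G)=r(K_{V(G)})$. $\mathcal{M}$ has the Lovász-Yemini property if there is a nonnegative integer $c$ such that every $c$-connected graph is $\mathcal{M}$-rigid. *)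

From mathcomp Require Import all_boot all_order.
From mathcomp Require Import finmap.
Set Implicit Arguments. Unset Strict Implicit. Unset Printing Implicit Defensive.
Local Open Scope fset_scope.

(* Vertices are natural numbers; an edge {u,v} is stored canonically as (u,v) with u < v.
   A graph is its (finite) edge set; since graphs have no isolated vertices, the vertex
   set is the set of endpoints.  No loops, no multi-edges: simple graphs. *)
Definition edge := (nat * nat)%type.

Definition is_graph (G : {fset edge}) : bool := all (fun e : edge => e.1 < e.2) G.

Definition verts (G : {fset edge}) : {fset nat} :=
  [fset e.1 | e in G] `|` [fset e.2 | e in G].

Definition mkedge (u v : nat) : edge := (minn u v, maxn u v).

Definition Kgraph (V : {fset nat}) : {fset edge} :=
  [fset ((u, v) : edge) | u in V, v in V & u < v].

Definition Kn (n : nat) : {fset edge} := Kgraph [fset i | i in iota 0 n].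

Definition is_matroid (E : {fset edge}) (indep : {fset edge} -> bool) : Prop :=
  [/\ indep fset0,
      (forall X Y, X `<=` Y -> Y `<=` E -> indep Y -> indep X) &
      (forall X Y, X `<=` E -> Y `<=` E -> indep X -> indep Y -> #|` X| < #|` Y| ->
         exists2 e, e \in Y `\` X & indep (e |` X))].

Definition graph_iso (phi : nat -> nat) (G H : {fset edge}) : Prop :=
  [/\ {in verts G &, injective phi},
      [fset phi x | x in verts G] = verts H &
      (forall u v, u \in verts G -> v \in verts G ->
         (mkedge u v \in G) = (mkedge (phi u) (phi v) \in H))].

Definition emap (phi : nat -> nat) (X : {fset edge}) : {fset edge} :=
  [fset mkedge (phi e.1) (phi e.2) | e in X].

(* A graph matroid family: M G is the independence predicate of the matroid M(G)
   on E(G) (only its values on subsets of E(G) are meaningful). *)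
Definition graph_matroid_family (M : {fset edge} -> {fset edge} -> bool) : Prop :=
  [/\ (forall G, is_graph G -> is_matroid G (M G)),
      (forall G H phi, is_graph G -> is_graph H -> graph_iso phi G H ->
         forall X, X `<=` G -> M G X = M H (emap phi X)) &
      (forall G H, is_graph G -> is_graph H -> H `<=` G ->
         forall X, X `<=` H -> M H X = M G X)].

Definition rank (M : {fset edge} -> {fset edge} -> bool) (G : {fset edge}) : nat :=
  \max_(X <- fpowerset G | M G X) #|` X|.

Definition bounded (M : {fset edge} -> {fset edge} -> bool) : Prop :=
  exists B, forall n, rank M (Kn n) <= B.

Definition M_rigid (M : {fset edge} -> {fset edge} -> bool) (G : {fset edge}) : Prop :=
  rank M G = rank M (Kgraph (verts G)).

Definition connected_minus (G : {fset edge}) (S : {fset nat}) : Prop :=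
  let adj := fun x y : nat =>
    [&& mkedge x y \in G, x != y, x \notin S & y \notin S] in
  forall u v, u \in verts G `\` S -> v \in verts G `\` S ->
    exists p : seq nat, path adj u p && (last u p == v).

Definition k_connected (c : nat) (G : {fset edge}) : Prop :=
  c < #|` verts G| /\
  forall S : {fset nat}, S `<=` verts G -> #|` S| < c -> connected_minus G S.

Definition lovasz_yemini (M : {fset edge} -> {fset edge} -> bool) : Prop :=
  exists c : nat, forall G, is_graph G -> k_connected c G -> M_rigid M G.

From mathcomp Require Import all_boot all_order.
From mathcomp Require Import finmap.
From mathcomp Require Import zify.
Set Implicit Arguments. Unset Strict Implicit. Unset Printing Implicit Defensive.
Local Open Scope fset_scope.

(* Let B bound the rank of every graph.  Since m |-> r(mK2) is bounded by B, some m has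
   r((m+1)K2) <= r(mK2); take c = 2B + 2m + 1.  In a c-connected graph G fix a basis J of
   M(K_V(G)).  As |V(J)| <= 2B, connectivity lets us greedily embed a copy F of mK2 in G
   avoiding V(J).  Each edge e of J is then disjoint from F, so F + e is a copy of (m+1)K2
   and r(F + e) <= r(F): all of J lies in the closure of F, whence
   r(K_V(G)) = |J| <= r(F) <= r(G). *)

Lemma mkedgeC u v : mkedge u v = mkedge v u.
Proof. by rewrite /mkedge minnC maxnC. Qed.

Lemma mkedge_eq a b c d :
  mkedge a b = mkedge c d -> (a = c /\ b = d) \/ (a = d /\ b = c).
Proof. case; lia. Qed.

Lemma mkedge_sorted (e : edge) : e.1 < e.2 -> mkedge e.1 e.2 = e.
Proof. by case: e => a b /= ab; rewrite /mkedge (minn_idPl (ltnW ab)) (maxn_idPr (ltnW ab)). Qed.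

Lemma mkedge_ends u v x : x = (mkedge u v).1 \/ x = (mkedge u v).2 <-> x = u \/ x = v.
Proof. rewrite /mkedge /=; lia. Qed.

Lemma mkedge_lt u v : u != v -> (mkedge u v).1 < (mkedge u v).2.
Proof. rewrite /mkedge /=; lia. Qed.

Lemma graph_lt G e : is_graph G -> e \in G -> e.1 < e.2.
Proof. by move=> /allP; apply. Qed.

Lemma is_graph_sub G H : is_graph G -> H `<=` G -> is_graph H.
Proof. by move=> /allP lt_G /fsubsetP HG; apply/allP => e /HG /lt_G. Qed.

Lemma verts1 G e : e \in G -> e.1 \in verts G.
Proof. by move=> eG; rewrite in_fsetU in_imfset. Qed.

Lemma verts2 G e : e \in G -> e.2 \in verts G.
Proof. by move=> eG; rewrite in_fsetU orbC in_imfset. Qed.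

Lemma vertsP G x : reflect (exists2 e, e \in G & x = e.1 \/ x = e.2) (x \in verts G).
Proof.
apply: (iffP idP) => [|[e eG [] ->]]; [|exact: verts1|exact: verts2].
by rewrite in_fsetU => /orP [] /imfsetP [e /= eG ->]; exists e; auto.
Qed.

Lemma card_verts G : #|` verts G| <= (#|` G|).*2.
Proof.
rewrite -addnn; apply: leq_trans (leq_card_fsetU _ _) _.
by apply: leq_add; apply: leq_imfset_card.
Qed.

Lemma in_Kgraph V e : (e \in Kgraph V) = [&& e.1 \in V, e.2 \in V & e.1 < e.2].
Proof.
apply/imfset2P/idP => [[u /= uV [v /= /andP [vV uv] ->]]|]; first by rewrite /= uV vV.
by case: e => u v /and3P [uV vV uv]; exists u => //; exists v; rewrite //= inE vV.
Qed.

Lemma is_graph_Kgraph V : is_graph (Kgraph V).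
Proof. by apply/allP => e; rewrite in_Kgraph => /and3P []. Qed.

Lemma graph_sub_Kgraph G : is_graph G -> G `<=` Kgraph (verts G).
Proof.
by move=> gG; apply/fsubsetP => e eG; rewrite in_Kgraph verts1 // verts2 // (graph_lt gG).
Qed.

Lemma Kgraph_subset V W : V `<=` W -> Kgraph V `<=` Kgraph W.
Proof.
move=> /fsubsetP VW; apply/fsubsetP => e; rewrite !in_Kgraph => /and3P [e1V e2V ->].
by rewrite !VW.
Qed.

Section Rank.

Variable M : {fset edge} -> {fset edge} -> bool.
Hypothesis M_family : graph_matroid_family M.

Lemma indep_restrict G H X : is_graph G -> H `<=` G -> X `<=` H -> M H X = M G X.
Proof.
case: M_family => _ _ restr gG HG; apply: restr => //; exact: is_graph_sub HG.
Qed.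

Lemma indep_card_le_rank G X : X `<=` G -> M G X -> #|` X| <= rank M G.
Proof. by move=> XG MX; apply: (leq_bigmax_seq X) => //; rewrite fpowersetE. Qed.

Lemma exists_basis G : is_graph G -> exists2 X, X `<=` G & M G X /\ #|` X| = rank M G.
Proof.
case: M_family => matroid _ _ gG; have [indep0 _ _] := matroid G gG.
rewrite /rank big_seq_cond.
apply: (big_ind (fun n => exists2 X, X `<=` G & M G X /\ #|` X| = n)) => [|m n|X].
- by exists fset0; rewrite ?fsub0set ?cardfs0.
- by case: (leqP m n).
- by rewrite fpowersetE => /andP [XG MX]; exists X.
Qed.

Lemma rank_subset G H : is_graph G -> H `<=` G -> rank M H <= rank M G.
Proof.
move=> gG HG; have [X XH [MX <-]] := exists_basis (is_graph_sub gG HG).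
by apply: indep_card_le_rank; [exact: fsubset_trans HG | rewrite -(indep_restrict gG HG)].
Qed.

Lemma bounded_rank B : (forall n, rank M (Kn n) <= B) -> forall G, is_graph G -> rank M G <= B.
Proof.
move=> rankKn_le G gG; apply: leq_trans (rankKn_le (\max_(x <- verts G) x).+1).
apply: rank_subset; first exact: is_graph_Kgraph.
apply: fsubset_trans (graph_sub_Kgraph gG) (Kgraph_subset _).
apply/fsubsetP => x xG; apply/imfsetP; exists x => //; rewrite mem_iota ltnS.
exact: leq_bigmax_seq.
Qed.

Lemma card_indep_le_rank_closure K F J :
  is_graph K -> F `<=` K -> J `<=` K -> M K J ->
  (forall e, e \in J -> rank M (e |` F) <= rank M F) -> #|` J| <= rank M F.
Proof.
move=> gK FK JK MJ closed; rewrite leqNgt; apply/negP => rF_lt.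
have [I IF [MI cardI]] := exists_basis (is_graph_sub gK FK).
have [matroid _ _] := M_family; have [_ _ exchange] := matroid K gK.
have [e /fsetDP [eJ eI] MeI] : exists2 e, e \in J `\` I & M K (e |` I).
  apply: exchange => //.
  - exact: fsubset_trans IF FK.
  - by rewrite -(indep_restrict gK FK IF).
  - by rewrite cardI.
have eFK : e |` F `<=` K by rewrite fsubUset fsub1set (fsubsetP JK).
have eIeF : e |` I `<=` e |` F by rewrite fsetUS.
have := indep_card_le_rank eIeF; rewrite (indep_restrict gK eFK eIeF) => /(_ MeI).
by rewrite cardfsU1 eI add1n cardI ltnNge closed.
Qed.

End Rank.

Section Embedding.

Variables (phi : nat -> nat) (G : {fset edge}).
Hypotheses (gG : is_graph G) (phi_inj : {in verts G &, injective phi}).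

Let phiE (e : edge) : edge := mkedge (phi e.1) (phi e.2).

Lemma emap_inj : {in G &, injective phiE}.
Proof.
move=> [a b] [c d] ab cd.
have /= inj1 := phi_inj (verts1 ab); have /= inj2 := phi_inj (verts2 ab).
case/mkedge_eq => /= [[/inj1 ac /inj2 bd]|[/inj1 ad /inj2 bc]].
  by rewrite ac ?bd ?(verts1 cd) ?(verts2 cd).
have := graph_lt gG ab; have := graph_lt gG cd.
by rewrite /= ad ?bc ?(verts1 cd) ?(verts2 cd) // => /ltn_trans lt /lt; rewrite ltnn.
Qed.

Lemma card_emap X : X `<=` G -> #|` emap phi X| = #|` X|.
Proof.
by move=> /fsubsetP XG; apply/eqP/card_in_imfsetP => e e' /XG eG /XG e'G; apply: emap_inj.
Qed.

Lemma emap_subset X : X `<=` G -> emap phi X `<=` emap phi G.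
Proof.
by move=> /fsubsetP XG; apply/fsubsetP => _ /imfsetP [e /= /XG eG ->]; apply: in_imfset.
Qed.

Lemma is_graph_emap : is_graph (emap phi G).
Proof.
apply/allP => _ /imfsetP [e /= eG ->]; apply: mkedge_lt.
apply/eqP => /(phi_inj (verts1 eG) (verts2 eG)) e12.
by have := graph_lt gG eG; rewrite e12 ltnn.
Qed.

Lemma graph_iso_emap : graph_iso phi G (emap phi G).
Proof.
split => //.
  apply/fsetP => y; apply/imfsetP/vertsP => [[x /= /vertsP [e eG xe] ->]|].
    by exists (phiE e); [exact: in_imfset | apply/mkedge_ends; case: xe => ->; auto].
  move=> [_ /imfsetP [e /= eG ->] /mkedge_ends [] ->].
    by exists e.1; rewrite ?verts1.
  by exists e.2; rewrite ?verts2.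
move=> u v uG vG; apply/idP/imfsetP => [uvG|[e /= eG /mkedge_eq]].
  by exists (mkedge u v); rewrite //= /phiE; case: (leqP u v) => _; rewrite // mkedgeC.
have [e1 e2] := conj (verts1 eG) (verts2 eG).
case=> [[/phi_inj -> // /phi_inj -> //]|[/phi_inj -> // /phi_inj -> //]].
  by rewrite mkedge_sorted // (graph_lt gG).
by rewrite mkedgeC mkedge_sorted // (graph_lt gG).
Qed.

Variable M : {fset edge} -> {fset edge} -> bool.
Hypothesis M_family : graph_matroid_family M.

Lemma indep_emap X : X `<=` G -> M (emap phi G) (emap phi X) = M G X.
Proof.
case: M_family => _ iso _ XG; symmetry.
exact: iso is_graph_emap graph_iso_emap X XG.
Qed.

Lemma rank_emap : rank M (emap phi G) = rank M G.
Proof.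
apply/eqP; rewrite eqn_leq; apply/andP; split; last first.
  have [X XG [MX <-]] := exists_basis M_family gG.
  rewrite -(card_emap XG); apply: indep_card_le_rank; first exact: emap_subset.
  by rewrite indep_emap.
have [Y YG [MY <-]] := exists_basis M_family is_graph_emap.
pose X := [fset e in G | phiE e \in Y].
have XG : X `<=` G by apply/fsubsetP => e; rewrite inE => /andP [].
have XY : emap phi X = Y.
  apply/fsetP => y; apply/imfsetP/idP => [[e /=]|yY]; first by rewrite inE => /andP [_ ?] ->.
  have /imfsetP [e /= eG ye] := fsubsetP YG y yY.
  by exists e; rewrite // !inE /= eG /phiE -ye.
by rewrite -XY card_emap //; apply: (indep_card_le_rank XG); rewrite -(indep_emap XG) XY.
Qed.

End Embedding.

Definition mK2 (m : nat) : {fset edge} := [fset (i.*2, i.*2.+1) | i in iota 0 m].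

Lemma mK2P m e : reflect (exists2 i, i < m & e = (i.*2, i.*2.+1)) (e \in mK2 m).
Proof.
apply: (iffP idP) => [/imfsetP [i /=]|[i im ->]].
  by rewrite mem_iota => im ->; exists i.
by apply/imfsetP; exists i; rewrite //= mem_iota.
Qed.

Lemma mK2S m : mK2 m.+1 = (m.*2, m.*2.+1) |` mK2 m.
Proof.
apply/fsetP => e; rewrite in_fset1U.
apply/mK2P/orP => [[i]|[/eqP ->|/mK2P [i im ->]]]; [|by exists m|by exists i; first exact: ltnW].
by rewrite ltnS leq_eqVlt => /orP [/eqP -> ->|im ->]; [left|right; apply/mK2P; exists i].
Qed.

Lemma is_graph_mK2 m : is_graph (mK2 m).
Proof. by apply/allP => e /mK2P [i _ ->]. Qed.

Lemma verts_mK2 m x : x \in verts (mK2 m) -> x < m.*2.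
Proof. by case/vertsP => e /mK2P [i im ->] /= [] ->; lia. Qed.

Lemma rank_emap_mK2 M phi m : graph_matroid_family M ->
  {in [pred i | i < m.*2] &, injective phi} -> rank M (emap phi (mK2 m)) = rank M (mK2 m).
Proof.
move=> M_family phi_inj; apply: (rank_emap (is_graph_mK2 m) _ M_family).
by move=> x y /verts_mK2 xm /verts_mK2 ym; apply: phi_inj.
Qed.

Section MatchingExtension.

Variables (phi : nat -> nat) (m : nat) (a b : nat).
Let psi := [eta phi with m.*2 |-> a, m.*2.+1 |-> b].

Lemma emap_mK2S : emap psi (mK2 m.+1) = mkedge a b |` emap phi (mK2 m).
Proof.
rewrite /emap mK2S imfsetU1 /psi /= eqxx (gtn_eqF (ltnSn _)) eqxx.
congr (_ |` _); apply: eq_in_imfset => _ /mK2P [i im ->] /=.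
by rewrite !ifN_eq //; lia.
Qed.

Lemma extend_cases k : k < m.+1.*2 ->
  [\/ k < m.*2 /\ psi k = phi k, k = m.*2 /\ psi k = a | k = m.*2.+1 /\ psi k = b].
Proof.
rewrite doubleS /psi /= => klt; case: eqVneq => [->|k2m]; first by constructor 2.
case: eqVneq => [->|k2m1]; first by constructor 3.
by constructor 1; split => //; lia.
Qed.

Hypothesis phi_inj : {in [pred i | i < m.*2] &, injective phi}.
Hypothesis a_fresh : forall i, i < m.*2 -> phi i != a.
Hypothesis b_fresh : forall i, i < m.*2 -> phi i != b.
Hypothesis ab_neq : a != b.

Lemma extend_inj : {in [pred i | i < m.+1.*2] &, injective psi}.
Proof.
move=> i j; rewrite !inE.
move=> /extend_cases [[ilt ->]|[-> ->]|[-> ->]] /extend_cases [[jlt ->]|[-> ->]|[-> ->]] //.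
- by move/phi_inj; apply.
- by move/eqP; rewrite (negbTE (a_fresh ilt)).
- by move/eqP; rewrite (negbTE (b_fresh ilt)).
- by move/esym/eqP; rewrite (negbTE (a_fresh jlt)).
- by move/eqP; rewrite (negbTE ab_neq).
- by move/esym/eqP; rewrite (negbTE (b_fresh jlt)).
- by move/esym/eqP; rewrite (negbTE ab_neq).
Qed.

Lemma rank_mK2S M : graph_matroid_family M ->
  rank M (mkedge a b |` emap phi (mK2 m)) = rank M (mK2 m.+1).
Proof. by move=> M_family; rewrite -emap_mK2S rank_emap_mK2 //; apply: extend_inj. Qed.

End MatchingExtension.

Lemma two_distinct (K : choiceType) (A : {fset K}) :
  1 < #|` A| -> exists v w, [/\ v \in A, w \in A & v != w].
Proof.
move=> A_gt1; have /fset0Pn [v vA] : A != fset0 by rewrite -cardfs_gt0 ltnW.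
have /fset0Pn [w] : A `\ v != fset0.
  by rewrite -cardfs_gt0; move: A_gt1; rewrite (cardfsD1 v) vA add1n ltnS.
by rewrite in_fsetD1 => /andP [wv wA]; exists v, w; rewrite eq_sym.
Qed.

Lemma k_connected_edge c G S : k_connected c G -> #|` S| < c ->
  exists u v, [/\ mkedge u v \in G, u != v, u \notin S & v \notin S].
Proof.
move=> [V_gt conn] S_lt; pose S' := S `&` verts G.
have S'_lt : #|` S'| < c by apply: leq_ltn_trans (fsubset_leq_card (fsubsetIl _ _)) S_lt.
have outS y : y \in verts G -> y \notin S' -> y \notin S by rewrite in_fsetI => ->; rewrite andbT.
have [v [w [vG wG vw]]] : exists v w, [/\ v \in verts G `\` S', w \in verts G `\` S' & v != w].
  by apply: two_distinct; rewrite cardfsDS ?fsubsetIr //; lia.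
have [[|x p] /andP [vp vpw]] := conn S' (fsubsetIr _ _) S'_lt v w vG wG.
  by rewrite /= (negbTE vw) in vpw.
case/andP: vp => /and4P [vxG vx vS' xS'] _; exists v, x.
have xG : x \in verts G by apply/vertsP; exists (mkedge v x); rewrite ?mkedge_ends; auto.
by move: vG; rewrite in_fsetD => /andP [vS'' vG]; rewrite !outS.
Qed.

Lemma k_connected_embeds_mK2 c G S m : k_connected c G -> #|` S| + m.*2 <= c ->
  exists phi, [/\ {in [pred i | i < m.*2] &, injective phi},
                  forall i, i < m.*2 -> phi i \notin S & emap phi (mK2 m) `<=` G].
Proof.
move=> Gc; elim: m => [|m IH] S_le.
  by exists id; split => //; apply/fsubsetP => y /imfsetP [e /mK2P [[|i]]].
have /IH [phi [phi_inj phi_S phiG]] : #|` S| + m.*2 <= c by lia.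
pose T := S `|` [fset phi i | i in iota 0 m.*2].
have T_lt : #|` T| < c.
  apply: leq_ltn_trans (leq_card_fsetU _ _) _.
  have : #|` [fset phi i | i in iota 0 m.*2]| <= m.*2.
    rewrite -[leqRHS](size_iota 0); apply: leq_trans (leq_imfset_card _ _ _) _.
    exact: size_undup.
  lia.
have [u [v [uvG uv uT vT]]] := k_connected_edge Gc T_lt.
have [uS vS] : u \notin S /\ v \notin S.
  by move: uT vT; rewrite !in_fsetU !negb_or => /andP [-> _] /andP [-> _].
have fresh x : x \notin T -> forall i, i < m.*2 -> phi i != x.
  move=> xT i im; apply: contraNneq xT => <-.
  by rewrite in_fsetU; apply/orP; right; apply: in_imfset; rewrite /= mem_iota.
exists [eta phi with m.*2 |-> u, m.*2.+1 |-> v]; split.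
- exact: extend_inj phi_inj (fresh u uT) (fresh v vT) uv.
- by move=> i /(@extend_cases phi m u v) [[/phi_S ? ->]|[_ ->]|[_ ->]].
- by rewrite emap_mK2S // fsubUset fsub1set uvG phiG.
Qed.

Lemma exists_plateau (h : nat -> nat) B : (forall m, h m <= B) -> exists m, h m.+1 <= h m.
Proof.
move=> h_le.
have [/hasP [m _ plateau]|/hasPn incr] := boolP (has (fun m => h m.+1 <= h m) (iota 0 B.+1)).
  by exists m.
suff /(_ B.+1 (leqnn _)) : forall n, n <= B.+1 -> n <= h n by rewrite leqNgt ltnS h_le.
elim => // n IH n_lt; have h_lt : h n < h n.+1 by rewrite ltnNge incr // mem_iota.
exact: leq_ltn_trans (IH (ltnW n_lt)) h_lt.
Qed.

Theorem lemma3p12 (M : {fset edge} -> {fset edge} -> bool) :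
  graph_matroid_family M -> bounded M -> lovasz_yemini M.
Proof.
move=> M_family [B rankKn_le]; have rank_le := bounded_rank M_family rankKn_le.
have [m plateau] := exists_plateau (fun m => rank_le _ (is_graph_mK2 m)).
exists (B.*2 + m.*2).+1 => G gG Gc; rewrite /M_rigid.
have gK := is_graph_Kgraph (verts G); have GK := graph_sub_Kgraph gG.
apply/eqP; rewrite eqn_leq rank_subset //=.
have [J JK [MJ <-]] := exists_basis M_family gK.
have J_le : #|` verts J| + m.*2 <= (B.*2 + m.*2).+1.
  apply: leqW; rewrite leq_add2r (leq_trans (card_verts J)) // leq_double.
  exact: leq_trans (indep_card_le_rank JK MJ) (rank_le _ gK).
have [phi [phi_inj phi_J FG]] := k_connected_embeds_mK2 Gc J_le.
apply: leq_trans (rank_subset M_family gG FG).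
apply: (card_indep_le_rank_closure M_family gK (fsubset_trans FG GK) JK MJ) => e eJ.
have fresh x : x \in verts J -> forall i, i < m.*2 -> phi i != x.
  by move=> xJ i /phi_J; apply: contraNneq => ->.
have e_lt := graph_lt gK (fsubsetP JK e eJ).
rewrite -(mkedge_sorted e_lt) rank_emap_mK2 //.
by rewrite (rank_mK2S phi_inj (fresh _ (verts1 eJ)) (fresh _ (verts2 eJ)) (negbT (ltn_eqF e_lt))).
Qed.
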